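(* Let $\mathcal{H}_A,\mathcal{H}_B$ be finite-dimensional Hilbert spaces with fixed reference bases $\{|i\rangle_A\}$ and $\{|j\rangle_B\}$, and equip $\mathcal{H}_A\otimes\mathcal{H}_B$ with the product reference basis. For every state $\rho_{AB}$ with reduced states $\rho_A,\rho_B$, $$C^{A|B}_a(\rho_{AB})\leq C_a(\rho_A)+E_a(\rho_{AB}),\qquad C_a(\rho_{AB})\leq C^{A|B}_a(\rho_{AB})+C_a(\rho_B),$$ $$C_a(\rho_{AB})\leq C_a(\rho_A)+C_a(\rho_B)+E_a(\rho_{AB}).$$
   Context: $S$ denotes von Neumann entropy. For a system with reference basis $\{|k\rangle\}$, $\Delta(\rho)=\sum_k|k\rangle\langle k|\rho|k\rangle\langle k|$. The coherence of assistance is $C_a(\rho)=\max\sum_ip_iS(\Delta(|\psi_i\rangle\langle\psi_i|))$, the maximum over all pure-state decompositions $\rho=\sum_ip_i|\psi_i\rangle\langle\psi_i|$ (for bipartite states $\Delta$ is with respect to the product basis). With $\Delta_A=\Delta\otimes\mathrm{id}_B$ dephasing only system $A$ in its basis, the IQ coherence of assistance is $C^{A|B}_a(\rho_{AB})=\max\sum_ip_iS(\Delta_A(|\psi_i\rangle\langle\psi_i|_{AB}))$ over all pure-state decompositions $\rho_{AB}=\sum_ip_i|\psi_i\rangle\langle\psi_i|_{AB}$. The entanglement of assistance is $E_a(\rho_{AB})=\max\sum_ip_iS(\mathrm{Tr}_A|\psi_i\rangle\langle\psi_i|_{AB})$ over all pure-state decompositions of $\rho_{AB}$. *)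

From HB Require Import structures.
From mathcomp Require Import all_boot all_order all_algebra.
From mathcomp Require Import classical_sets reals exp.
From mathcomp Require Import complex mxtens.

Set Implicit Arguments.
Unset Strict Implicit.
Unset Printing Implicit Defensive.

Import Order.TTheory GRing.Theory Num.Theory.
Local Open Scope ring_scope.

Section Quantum.
Variable R : realType.
Local Notation C := (R[i]).

Definition adj (p q : nat) (A : 'M[C]_(p, q)) : 'M[C]_(q, p) :=
  (map_mx Num.conj A)^T.

Definition psdmx (d : nat) (A : 'M[C]_d) : Prop :=
  forall v : 'cV[C]_d, 0 <= (adj v *m A *m v) 0 0.

Definition density (d : nat) (rho : 'M[C]_d) : Prop :=
  [/\ adj rho = rho, psdmx rho & \tr rho = 1].

Definition spectrum (d : nat) (A : 'M[C]_d) : seq C :=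
  sval (closed_field_poly_normal (char_poly A)).

(* von Neumann entropy S(rho) = - Tr rho ln rho = - sum_k l_k ln l_k
   (natural logarithm; 0 ln 0 = 0) *)
Definition vN_entropy (d : nat) (A : 'M[C]_d) : R :=
  - \sum_(z <- spectrum A) (complex.Re z * ln (complex.Re z)).

Definition proj (d : nat) (psi : 'cV[C]_d) : 'M[C]_d := psi *m adj psi.

Definition pure_decomp (d k : nat) (rho : 'M[C]_d) (p : 'I_k -> R)
    (psi : 'I_k -> 'cV[C]_d) : Prop :=
  [/\ forall i, 0 <= p i,
      \sum_(i < k) p i = 1,
      forall i, adj (psi i) *m psi i = 1
    & rho = \sum_(i < k) (Complex (p i) 0) *: proj (psi i)].

(* max over all pure-state decompositions of sum_i p_i f(psi_i)
   (written as a supremum; the maximum is attained) *)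
Definition assist (d : nat) (f : 'cV[C]_d -> R) (rho : 'M[C]_d) : R :=
  sup [set x : R | exists (k : nat) (p : 'I_k -> R) (psi : 'I_k -> 'cV[C]_d),
                     pure_decomp rho p psi /\ x = \sum_(i < k) p i * f (psi i)].

Definition dephase (d : nat) (A : 'M[C]_d) : 'M[C]_d :=
  \matrix_(i, j) (if i == j then A i j else 0).

(* Bipartite system: H_A (dim m) ⊗ H_B (dim n), product basis |i>|j> indexed
   by mxtens_index (i, j) = i * n + j (Kronecker ordering). *)
Definition dephaseA (m n : nat) (A : 'M[C]_(m * n)) : 'M[C]_(m * n) :=
  \matrix_(k, l) (if (mxtens_unindex k).1 == (mxtens_unindex l).1
                  then A k l else 0).

Definition ptraceA (m n : nat) (A : 'M[C]_(m * n)) : 'M[C]_n :=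
  \matrix_(j, j') \sum_(i < m) A (mxtens_index (i, j)) (mxtens_index (i, j')).

Definition ptraceB (m n : nat) (A : 'M[C]_(m * n)) : 'M[C]_m :=
  \matrix_(i, i') \sum_(j < n) A (mxtens_index (i, j)) (mxtens_index (i', j)).

Definition Coh_a (d : nat) (rho : 'M[C]_d) : R :=
  assist (fun psi => vN_entropy (dephase (proj psi))) rho.

Definition CohIQ_a (m n : nat) (rho : 'M[C]_(m * n)) : R :=
  assist (fun psi => vN_entropy (dephaseA (proj psi))) rho.

Definition Ent_a (m n : nat) (rho : 'M[C]_(m * n)) : R :=
  assist (fun psi => vN_entropy (ptraceA (proj psi))) rho.

End Quantum.

(* For a pure state psi with amplitudes psi_ij put P_ij = |psi_ij|^2.  Its
   coherence is the Shannon entropy H(P), its IQ coherence is the entropy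
   H(P_A) of the A-marginal, and its entanglement is the entropy of the
   spectrum of rho_B = Tr_A |psi><psi|.  The chain rule
   H(P) = H(P_A) + sum_i P_A(i) H(P(.|i)) bounds C(psi) by C^{A|B}(psi) plus
   an average of coherences of the normalised conditional vectors psi(.|i),
   which form a pure decomposition of rho_B.  For the other bound, rotate the
   B-side of psi by the unitary diagonalising rho_B: the rotated amplitude
   matrix G has the same A-marginal, its rows are orthogonal with the Schmidt
   weights as squared norms, and they decompose rho_A.  H(P_A) is at most the
   joint entropy of |G|^2, which the chain rule splits into the Schmidt
   entropy E(psi) plus averaged coherences.  For mixed states, average these
   pure-state bounds over a decomposition of rho and concatenate the
   decompositions of the reduced states; the third inequality is the sum of
   the first two. *)

From HB Require Import structures.
From mathcomp Require Import all_boot all_order all_algebra.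
From mathcomp Require Import classical_sets reals exp.
From mathcomp Require Import complex mxtens spectral.
From mathcomp Require Import boolp ring lra.
Import Order.TTheory GRing.Theory Num.Theory.

Set Implicit Arguments.
Unset Strict Implicit.
Unset Printing Implicit Defensive.

Local Open Scope complex_scope.
Local Open Scope ring_scope.

Section XlnX.
Variable R : realType.
Implicit Types x : R.

Definition xlnx x : R := x * ln x.

Lemma xlnx0 : xlnx 0 = 0. Proof. by rewrite /xlnx mul0r. Qed.

Lemma xlnx_geN1 x : -1 <= xlnx x.
Proof.
rewrite /xlnx; have [x_le0|x_gt0] := leP x 0; first by rewrite ln0 // mulr0 lerN10.
have : ln x^-1 <= x^-1 - 1.
  have := @le_ln1Dx R (x^-1 - 1); rewrite [1 + _]addrC subrK; apply.
  have : 0 < x^-1 by rewrite invr_gt0.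
  lra.
rewrite lnV ?posrE // => lnV_le.
have : x * - ln x <= x * (x^-1 - 1) by rewrite ler_wpM2l // ltW.
rewrite mulrBr divff ?gt_eqF // mulr1 mulrN; lra.
Qed.

Lemma xlnx_le0 x : 0 <= x <= 1 -> xlnx x <= 0.
Proof. by case/andP => x_ge0 x_le1; rewrite /xlnx mulr_ge0_le0 // ln_le0. Qed.

Lemma sum_xlnx_group b (P : 'I_b -> R) : (forall j, 0 <= P j) ->
  \sum_j xlnx (P j) = xlnx (\sum_j P j) + (\sum_j P j) * \sum_j xlnx (P j / \sum_j P j).
Proof.
move=> P_ge0; set s := \sum_j P j.
have [s0|s_neq0] := eqVneq s 0.
  have P0 j : P j = 0.
    by apply/eqP; move/eqP: s0; rewrite psumr_eq0 // => /allP/(_ j (mem_index_enum j)).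
  by rewrite s0 mul0r addr0 xlnx0 big1 // => j _; rewrite P0 xlnx0.
have s_gt0 : 0 < s by rewrite lt_def s_neq0 sumr_ge0.
rewrite mulr_sumr [X in _ = _ + X](eq_bigr (fun j => xlnx (P j) - P j * ln s)); last first.
  move=> j _; rewrite /xlnx mulrA mulrCA divff // mulr1.
  have [->|Pj_neq0] := eqVneq (P j) 0; first by rewrite !mul0r subr0.
  by rewrite ln_div ?posrE ?mulrBr // lt_def Pj_neq0 P_ge0.
by rewrite sumrB -mulr_suml /xlnx addrC subrK.
Qed.

Lemma sum_xlnx_le_marginal a b (P : 'I_a -> 'I_b -> R) : (forall i j, 0 <= P i j) ->
  \sum_i \sum_j xlnx (P i j) <= \sum_j xlnx (\sum_i P i j).
Proof.
move=> P_ge0; rewrite exchange_big /=; apply: ler_sum => j _.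
rewrite /xlnx mulr_suml; apply: ler_sum => i _.
have [->|Pij_neq0] := eqVneq (P i j) 0; first by rewrite !mul0r.
have Pij_gt0 : 0 < P i j by rewrite lt_def Pij_neq0 P_ge0.
have Pij_le : P i j <= \sum_k P k j by rewrite (bigD1 i) //= lerDl sumr_ge0.
apply: ler_wpM2l; first exact: ltW.
by rewrite ler_ln ?posrE // (lt_le_trans Pij_gt0).
Qed.

End XlnX.

(* Sylvester's determinant identity, from two block factorisations of
   [[X, A], [B, 1]]. *)
Lemma char_poly_mulmxC (F : comNzRingType) p q (A : 'M[F]_(p, q)) (B : 'M[F]_(q, p)) :
  'X^q * char_poly (A *m B) = 'X^p * char_poly (B *m A).
Proof.
set a := map_mx polyC A; set b := map_mx polyC B.
pose M := block_mx ('X%:M : 'M_p) a b (1%:M : 'M_q).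
have detM : \det M = char_poly (A *m B).
  have := det_mulmx (block_mx (1%:M : 'M_p) (- a) 0 (1%:M : 'M_q)) M.
  rewrite det_ublock !det1 !mul1r => <-.
  rewrite mulmx_block !mul1mx !mul0mx !add0r !mulmx1 subrr det_lblock det1 mulr1.
  by rewrite /char_poly /char_poly_mx map_mxM mulNmx.
have := det_mulmx (block_mx (1%:M : 'M_p) 0 (- b) ('X%:M : 'M_q)) M.
rewrite det_lblock det1 mul1r det_scalar detM => <-.
rewrite mulmx_block !mul1mx !mul0mx !addr0 mulmx1.
rewrite mulNmx mul_scalar_mx mul_mx_scalar addNr det_ublock det_scalar.
by rewrite /char_poly /char_poly_mx map_mxM mulNmx addrC.
Qed.

Section VonNeumannEntropy.
Variable R : realType.
Local Notation C := R[i].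

Lemma char_poly_spectrum d (A : 'M[C]_d) :
  char_poly A = \prod_(z <- spectrum A) ('X - z%:P).
Proof.
rewrite /spectrum; case: closed_field_poly_normal => s /= ->.
by rewrite (monicP (char_poly_monic A)) scale1r.
Qed.

Lemma vN_entropy_perm d (A : 'M[C]_d) (s : seq C) :
  perm_eq (spectrum A) s -> vN_entropy A = - \sum_(z <- s) xlnx (complex.Re z).
Proof. by move=> eq_s; rewrite /vN_entropy (perm_big _ eq_s). Qed.

Lemma vN_entropy_diag d (x : 'I_d -> R) :
  vN_entropy (diag_mx (\row_i (x i)%:C)) = - \sum_i xlnx (x i).
Proof.
rewrite (@vN_entropy_perm _ _ [seq (x i)%:C | i <- enum 'I_d]).
  by rewrite big_map big_enum.
apply: prod_XsubC_eq; rewrite -char_poly_spectrum char_poly_trig ?diag_mx_is_trig //.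
by rewrite big_map big_enum; apply: eq_bigr => i _; rewrite !mxE eqxx.
Qed.

Lemma vN_entropy_mulmxC p q (A : 'M[C]_(p, q)) (B : 'M[C]_(q, p)) :
  vN_entropy (A *m B) = vN_entropy (B *m A).
Proof.
have prod_nseq0 k : \prod_(z <- nseq k (0 : C)) ('X - z%:P) = 'X^k.
  by elim: k => [|k IHk]; rewrite ?big_nil ?expr0 // big_cons IHk subr0 exprS.
have sum_nseq0 k s : \sum_(z <- s ++ nseq k (0 : C)) xlnx (complex.Re z) =
                     \sum_(z <- s) xlnx (complex.Re z).
  rewrite big_cat /= [X in _ + X]big1_seq ?addr0 // => z /andP[_ /nseqP[-> _]].
  exact: xlnx0.
rewrite /vN_entropy -(sum_nseq0 q) -[in RHS](sum_nseq0 p); congr (- _).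
apply/perm_big/prod_XsubC_eq.
by rewrite !big_cat /= !prod_nseq0 -!char_poly_spectrum mulrC char_poly_mulmxC mulrC.
Qed.

Lemma vN_entropy_le_dim d (A : 'M[C]_d) : vN_entropy A <= d%:R.
Proof.
have size_spectrum : size (spectrum A) = d.
  by have := size_char_poly A; rewrite char_poly_spectrum size_prod_XsubC => -[].
rewrite /vN_entropy -sumrN -[X in _ <= X%:R]size_spectrum.
elim: (spectrum A) => [|z s IHs]; first by rewrite big_nil.
by rewrite big_cons /= -add1n natrD lerD // lerNl xlnx_geN1.
Qed.

End VonNeumannEntropy.

Section Amplitudes.
Variable R : realType.
Local Notation C := R[i].

Definition sqnorm (z : C) : R := complex.Re (z * z^*).

Lemma sqnormE (z : C) : z * z^* = (sqnorm z)%:C.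
Proof. by case: z => a b; rewrite /sqnorm /real_complex_def /=; congr Complex; ring. Qed.

Lemma sqnorm_ge0 (z : C) : 0 <= sqnorm z.
Proof. by case: z => a b; rewrite /sqnorm /= mulrN opprK addr_ge0 // -expr2 sqr_ge0. Qed.

Lemma sqnorm_eq0 (z : C) : (sqnorm z == 0) = (z == 0).
Proof. by rewrite -mul_conjC_eq0 sqnormE (inj_eq (fmorph_inj _)). Qed.

Lemma sqnormZ (c : R) (z : C) : sqnorm (c%:C * z) = c ^+ 2 * sqnorm z.
Proof. by case: z => a b; rewrite /sqnorm /=; ring. Qed.

Definition sqnormv d (v : 'cV[C]_d) : R := \sum_j sqnorm (v j 0).

Lemma sqnormv_ge0 d (v : 'cV[C]_d) : 0 <= sqnormv v.
Proof. by apply: sumr_ge0 => j _; apply: sqnorm_ge0. Qed.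

Lemma sqnorm_le_sqnormv d (v : 'cV[C]_d) j : sqnorm (v j 0) <= sqnormv v.
Proof. by rewrite /sqnormv (bigD1 j) //= lerDl sumr_ge0 // => k _; apply: sqnorm_ge0. Qed.

Lemma sqnormv_eq0 d (v : 'cV[C]_d) : sqnormv v = 0 -> v = 0.
Proof.
move/eqP; rewrite psumr_eq0 => [/allP v0|j _]; last exact: sqnorm_ge0.
apply/matrixP => j k; rewrite ord1 mxE; apply/eqP; rewrite -sqnorm_eq0.
exact: (implyP (v0 j (mem_index_enum j))).
Qed.

Lemma adjE p q (A : 'M[C]_(p, q)) i j : adj A i j = (A j i)^*.
Proof. by rewrite !mxE. Qed.

Lemma adjK p q (A : 'M[C]_(p, q)) : adj (adj A) = A.
Proof. by apply/matrixP => i j; rewrite !adjE conjCK. Qed.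

Lemma adj_mulmx p q r (A : 'M[C]_(p, q)) (B : 'M[C]_(q, r)) :
  adj (A *m B) = adj B *m adj A.
Proof. by rewrite /adj map_mxM trmx_mul. Qed.

Lemma adj_trmxC p q (A : 'M[C]_(p, q)) : adj A = (A ^t* )%sesqui.
Proof. exact: map_trmx. Qed.

Lemma projE d (v : 'cV[C]_d) i j : proj v i j = v i 0 * (v j 0)^*.
Proof. by rewrite !mxE big_ord1 adjE. Qed.

Lemma adj_mulmx_cV d (v : 'cV[C]_d) : adj v *m v = (sqnormv v)%:C%:M.
Proof.
apply/matrixP => a b; rewrite !ord1 !mxE mulr1n /sqnormv rmorph_sum.
by apply: eq_bigr => j _; rewrite adjE mulrC sqnormE.
Qed.

Lemma sqnormv_unit d (v : 'cV[C]_d) : adj v *m v = 1 -> sqnormv v = 1.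
Proof. by rewrite adj_mulmx_cV => /matrixP/(_ 0 0); rewrite !mxE mulr1n => -[]. Qed.

Lemma adj_mulmx_diag p q (A : 'M[C]_(p, q)) j :
  (adj A *m A) j j = (sqnormv (col j A))%:C.
Proof.
rewrite mxE /sqnormv rmorph_sum; apply: eq_bigr => i _.
by rewrite adjE mulrC sqnormE !mxE.
Qed.

Lemma mulmx_adj_diag p q (A : 'M[C]_(p, q)) i :
  (A *m adj A) i i = (sqnormv (row i A)^T)%:C.
Proof.
rewrite mxE /sqnormv rmorph_sum; apply: eq_bigr => j _.
by rewrite adjE sqnormE !mxE.
Qed.

Lemma mulmx_adj_sum_proj_col p q (A : 'M[C]_(p, q)) :
  A *m adj A = \sum_j proj (col j A).
Proof.
apply/matrixP => i i'; rewrite mxE summxE; apply: eq_bigr => j _.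
by rewrite projE adjE !mxE.
Qed.

Lemma sum_proj_row p q (A : 'M[C]_(p, q)) :
  \sum_i proj (row i A)^T = (adj A *m A)^T.
Proof.
apply/matrixP => j j'; rewrite summxE !mxE; apply: eq_bigr => i _.
by rewrite projE adjE !mxE mulrC.
Qed.

Lemma sum_sqnormv_row p q (A : 'M[C]_(p, q)) :
  \sum_i sqnormv (row i A)^T = \sum_j sqnormv (col j A).
Proof.
rewrite exchange_big; apply: eq_bigr => j _; apply: eq_bigr => i _.
by rewrite !mxE.
Qed.

Lemma sqnormv_col_gram p q (A G : 'M[C]_(p, q)) j :
  adj A *m A = adj G *m G -> sqnormv (col j A) = sqnormv (col j G).
Proof. by move=> gram; apply: (@complexI R); rewrite -!adj_mulmx_diag gram. Qed.

Lemma diag_mulmx_adj p q (A : 'M[C]_(p, q)) : is_diag_mx (A *m adj A) ->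
  A *m adj A = diag_mx (\row_i (sqnormv (row i A)^T)%:C).
Proof.
move=> /is_diag_mxP A_diag; apply/matrixP => i i'; rewrite !mxE.
have [<-|neq_ii'] := eqVneq i i'; first by rewrite mulr1n -mulmx_adj_diag mxE.
by rewrite mulr0n -[RHS](A_diag i i') ?mxE.
Qed.

Lemma gram_diagonalize p q (B : 'M[C]_(p, q)) :
  exists G : 'M[C]_(p, q), adj G *m G = adj B *m B /\ is_diag_mx (G *m adj G).
Proof.
set H := B *m adj B.
have H_normal : H \is normalmx.
  by apply/normalmxP; rewrite -adj_trmxC /H adj_mulmx adjK.
pose P := spectralmx H.
have P_unitary : P *m adj P = 1 by rewrite adj_trmxC; apply/unitarymxP/spectral_unitarymx.
have P_unitary' : adj P *m P = 1 by apply: mulmx1C.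
have H_diag : H = adj P *m diag_mx (spectral_diag H) *m P.
  by rewrite adj_trmxC -invmx_unitary ?spectral_unitarymx //; apply/orthomx_spectralP.
exists (P *m B); split.
  by rewrite adj_mulmx mulmxA -[adj B *m adj P *m P]mulmxA P_unitary' mulmx1.
rewrite adj_mulmx !mulmxA -[P *m B *m adj B]mulmxA -/H H_diag !mulmxA P_unitary mul1mx.
by rewrite -mulmxA P_unitary mulmx1 diag_mx_is_diag.
Qed.

Lemma conj_real (x : R) : (x%:C)^* = x%:C :> C.
Proof. exact: conjc_real. Qed.

Lemma proj_scale d (c : C) (v : 'cV[C]_d) : proj (c *: v) = (c * c^*) *: proj v.
Proof. by apply/matrixP => i j; rewrite projE [RHS]mxE projE !mxE rmorphM mulrACA. Qed.

(* For [v = 0] this is an arbitrary unit vector, which only ever occurs with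
   weight [sqnormv v = 0]. *)
Definition normalize d (j0 : 'I_d) (v : 'cV[C]_d) : 'cV[C]_d :=
  if sqnormv v == 0 then delta_mx j0 0 else (Num.sqrt (sqnormv v))^-1%:C *: v.

Section Normalize.
Variables (d : nat) (j0 : 'I_d) (v : 'cV[C]_d).

Lemma sqnorm_normalize j : sqnormv v != 0 ->
  sqnorm (normalize j0 v j 0) = sqnorm (v j 0) / sqnormv v.
Proof.
move=> v_neq0; rewrite /normalize (negbTE v_neq0) mxE sqnormZ exprVn.
by rewrite sqr_sqrtr ?sqnormv_ge0 // mulrC.
Qed.

Lemma normalize_unit : adj (normalize j0 v) *m normalize j0 v = 1.
Proof.
rewrite adj_mulmx_cV; have [v0|v_neq0] := eqVneq (sqnormv v) 0.
  rewrite /normalize v0 eqxx /sqnormv (bigD1 j0) //= big1 ?addr0.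
    by rewrite mxE !eqxx /sqnorm /= oppr0 mulr0 subr0 mulr1.
  by move=> j /negbTE j_neq; rewrite mxE j_neq /sqnorm /= !mul0r subrr.
rewrite /sqnormv (eq_bigr _ (fun j _ => sqnorm_normalize j v_neq0)).
by rewrite -mulr_suml divff.
Qed.

Lemma proj_normalize : (sqnormv v)%:C *: proj (normalize j0 v) = proj v.
Proof.
have [v0|v_neq0] := eqVneq (sqnormv v) 0.
  by rewrite v0 scale0r (sqnormv_eq0 v0) /proj mul0mx.
rewrite /normalize (negbTE v_neq0) proj_scale scalerA conj_real -!rmorphM -expr2.
by rewrite exprVn sqr_sqrtr ?sqnormv_ge0 // divff // rmorph1 scale1r.
Qed.

End Normalize.

Lemma pure_decomp_normalize k d (j0 : 'I_d) (v : 'I_k -> 'cV[C]_d) :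
  \sum_i sqnormv (v i) = 1 ->
  pure_decomp (\sum_i proj (v i)) (fun i => sqnormv (v i)) (fun i => normalize j0 (v i)).
Proof.
move=> sum1; split=> // [i|i|]; first exact: sqnormv_ge0.
  exact: normalize_unit.
by apply: eq_bigr => i _; rewrite -[in LHS](proj_normalize j0).
Qed.

Definition pure_coh d (v : 'cV[C]_d) : R := vN_entropy (dephase (proj v)).

Lemma pure_cohE d (v : 'cV[C]_d) : pure_coh v = - \sum_k xlnx (sqnorm (v k 0)).
Proof.
rewrite /pure_coh -vN_entropy_diag; congr vN_entropy.
apply/matrixP => i j; rewrite mxE projE !mxE.
by case: eqVneq => [->|]; rewrite ?sqnormE ?mulr1n ?mulr0n.
Qed.

Lemma pure_coh_ge0 d (v : 'cV[C]_d) : adj v *m v = 1 -> 0 <= pure_coh v.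
Proof.
move=> /sqnormv_unit v1; rewrite pure_cohE oppr_ge0; apply: sumr_le0 => j _.
by rewrite xlnx_le0 // sqnorm_ge0 -v1 sqnorm_le_sqnormv.
Qed.

Lemma pure_coh_group d (j0 : 'I_d) (v : 'cV[C]_d) :
  pure_coh v = - xlnx (sqnormv v) + sqnormv v * pure_coh (normalize j0 v).
Proof.
rewrite !pure_cohE sum_xlnx_group; last by move=> j; apply: sqnorm_ge0.
rewrite -/(sqnormv v) opprD; congr (_ + _).
have [->|v_neq0] := eqVneq (sqnormv v) 0; first by rewrite !mul0r oppr0.
by rewrite mulrN; congr (- (_ * _)); apply: eq_bigr => j _; rewrite sqnorm_normalize.
Qed.

End Amplitudes.

Lemma sum_mxtens (V : nmodType) m n (F : 'I_(m * n) -> V) :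
  \sum_k F k = \sum_i \sum_j F (mxtens_index (i, j)).
Proof.
rewrite (reindex (@mxtens_index m n)) /=; last first.
  by exists (@mxtens_unindex m n) => k _; [apply: mxtens_indexK | apply: mxtens_unindexK].
by rewrite pair_big /=; apply: eq_bigr => -[i j] _.
Qed.

Section Bipartite.
Variables (R : realType) (m n : nat).
Local Notation C := R[i].
Implicit Types psi : 'cV[C]_(m * n).

Definition amplmx psi : 'M[C]_(n, m) := \matrix_(j, i) psi (mxtens_index (i, j)) 0.

Lemma sum_sqnormv_amplmx psi : \sum_i sqnormv (col i (amplmx psi)) = sqnormv psi.
Proof.
rewrite /sqnormv [RHS]sum_mxtens; apply: eq_bigr => i _; apply: eq_bigr => j _.
by rewrite !mxE.
Qed.

Lemma ptraceA_proj psi : ptraceA (proj psi) = amplmx psi *m adj (amplmx psi).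
Proof.
apply/matrixP => j j'; rewrite !mxE; apply: eq_bigr => i _.
by rewrite projE adjE !mxE.
Qed.

Lemma ptraceB_proj psi : ptraceB (proj psi) = \sum_j proj (row j (amplmx psi))^T.
Proof.
apply/matrixP => i i'; rewrite mxE summxE; apply: eq_bigr => j _.
by rewrite !projE !mxE.
Qed.

Fact ptraceA_is_linear : linear (@ptraceA R m n).
Proof.
move=> a A B; apply/matrixP => j j'; rewrite !mxE mulr_sumr -big_split.
by apply: eq_bigr => i _; rewrite !mxE.
Qed.

HB.instance Definition _ :=
  GRing.isLinear.Build C 'M[C]_(m * n) 'M[C]_n _ (@ptraceA R m n) ptraceA_is_linear.

Fact ptraceB_is_linear : linear (@ptraceB R m n).
Proof.
move=> a A B; apply/matrixP => i i'; rewrite !mxE mulr_sumr -big_split.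
by apply: eq_bigr => j _; rewrite !mxE.
Qed.

HB.instance Definition _ :=
  GRing.isLinear.Build C 'M[C]_(m * n) 'M[C]_m _ (@ptraceB R m n) ptraceB_is_linear.

Definition pure_iq psi : R := vN_entropy (dephaseA (proj psi)).

Definition pure_ent psi : R := vN_entropy (ptraceA (proj psi)).

Lemma pure_iqE psi : pure_iq psi = - \sum_i xlnx (sqnormv (col i (amplmx psi))).
Proof.
rewrite /pure_iq.
(* [W] splits psi into its A-blocks: dephaseA |psi><psi| = W W^* while W^* W
   is diagonal. *)
pose W : 'M[C]_(m * n, m) :=
  \matrix_(k, i) (if (mxtens_unindex k).1 == i then psi k 0 else 0).
have -> : dephaseA (proj psi) = W *m adj W.
  apply/matrixP => k l; rewrite mxE projE mxE (bigD1 (mxtens_unindex k).1) //=.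
  rewrite big1 => [|i /negbTE i_neq]; last by rewrite adjE !mxE eq_sym i_neq mul0r.
  rewrite addr0 adjE !mxE eqxx [(mxtens_unindex l).1 == _]eq_sym.
  by case: eqP; rewrite ?rmorph0 ?mulr0.
rewrite vN_entropy_mulmxC -vN_entropy_diag; congr vN_entropy.
apply/matrixP => i i'; rewrite [LHS]mxE sum_mxtens (bigD1 i) //=.
rewrite [X in _ + X]big1 => [|i'' /negbTE i''_neq]; last first.
  by apply: big1 => j _; rewrite adjE !mxE mxtens_indexK /= i''_neq rmorph0 mul0r.
rewrite addr0 !mxE; have [<-|/negbTE i_neq] := eqVneq i i'.
  rewrite mulr1n /sqnormv rmorph_sum; apply: eq_bigr => j _.
  by rewrite adjE !mxE mxtens_indexK /= eqxx mulrC sqnormE.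
by rewrite mulr0n; apply: big1 => j _; rewrite !mxE mxtens_indexK /= i_neq mulr0.
Qed.

Lemma pure_coh_sum_col psi : pure_coh psi = \sum_i pure_coh (col i (amplmx psi)).
Proof.
rewrite pure_cohE sum_mxtens -sumrN; apply: eq_bigr => i _.
by rewrite pure_cohE; congr (- _); apply: eq_bigr => j _; rewrite !mxE.
Qed.

Lemma pure_coh_chain (j0 : 'I_n) psi :
  pure_coh psi = pure_iq psi + \sum_i sqnormv (col i (amplmx psi)) *
                                 pure_coh (normalize j0 (col i (amplmx psi))).
Proof.
rewrite pure_coh_sum_col pure_iqE -sumrN -big_split /=.
by apply: eq_bigr => i _; rewrite (pure_coh_group j0).
Qed.

Section Gram.
Variables (psi : 'cV[C]_(m * n)) (G : 'M[C]_(n, m)).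
Hypotheses (gram : adj G *m G = adj (amplmx psi) *m amplmx psi)
           (G_diag : is_diag_mx (G *m adj G)).

Lemma pure_ent_gram : pure_ent psi = - \sum_j xlnx (sqnormv (row j G)^T).
Proof.
rewrite /pure_ent ptraceA_proj vN_entropy_mulmxC -gram vN_entropy_mulmxC.
by rewrite diag_mulmx_adj // vN_entropy_diag.
Qed.

Lemma pure_iq_le_gram (i0 : 'I_m) :
  pure_iq psi <= pure_ent psi + \sum_j sqnormv (row j G)^T *
                                  pure_coh (normalize i0 (row j G)^T).
Proof.
rewrite pure_ent_gram -sumrN -big_split /=.
rewrite (eq_bigr (fun j => pure_coh (row j G)^T)) => [|j _]; last first.
  by rewrite [RHS](pure_coh_group i0).
rewrite pure_iqE (eq_bigr (fun i => xlnx (\sum_j sqnorm (G j i)))) => [|i _]; last first.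
  rewrite (sqnormv_col_gram i (esym gram)); congr xlnx.
  by apply: eq_bigr => j _; rewrite mxE.
rewrite (eq_bigr (fun j => - \sum_i xlnx (sqnorm (G j i)))) => [|j _]; last first.
  by rewrite pure_cohE; congr (- _); apply: eq_bigr => i _; rewrite !mxE.
by rewrite sumrN lerN2; apply: sum_xlnx_le_marginal => j i; apply: sqnorm_ge0.
Qed.

End Gram.

Lemma pure_coh_le_decomp (j0 : 'I_n) psi : adj psi *m psi = 1 ->
  exists (mu : 'I_m -> R) (phi : 'I_m -> 'cV[C]_n),
    pure_decomp (ptraceA (proj psi)) mu phi /\
    pure_coh psi <= pure_iq psi + \sum_i mu i * pure_coh (phi i).
Proof.
move=> /sqnormv_unit psi1; set B := amplmx psi.
exists (fun i => sqnormv (col i B)), (fun i => normalize j0 (col i B)).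
split; last by rewrite (pure_coh_chain j0).
rewrite ptraceA_proj mulmx_adj_sum_proj_col; apply: pure_decomp_normalize.
by rewrite sum_sqnormv_amplmx.
Qed.

Lemma pure_iq_le_decomp (i0 : 'I_m) psi : adj psi *m psi = 1 ->
  exists (mu : 'I_n -> R) (phi : 'I_n -> 'cV[C]_m),
    pure_decomp (ptraceB (proj psi)) mu phi /\
    pure_iq psi <= pure_ent psi + \sum_j mu j * pure_coh (phi j).
Proof.
move=> /sqnormv_unit psi1; have [G [gram G_diag]] := gram_diagonalize (amplmx psi).
exists (fun j => sqnormv (row j G)^T), (fun j => normalize i0 (row j G)^T).
split; last exact: pure_iq_le_gram.
rewrite ptraceB_proj sum_proj_row -gram -sum_proj_row; apply: pure_decomp_normalize.
rewrite sum_sqnormv_row -psi1 -sum_sqnormv_amplmx.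
by apply: eq_bigr => i _; rewrite (sqnormv_col_gram _ gram).
Qed.

End Bipartite.

Lemma density_dim_gt0 (R : realType) d (rho : 'M[R[i]]_d) : density rho -> (0 < d)%N.
Proof.
case: d rho => // rho [_ _]; rewrite /mxtrace big_ord0 => /eqP.
by rewrite eq_sym oner_eq0.
Qed.

Section Assistance.
Variables (R : realType) (d : nat).
Local Notation C := R[i].
Implicit Types (f : 'cV[C]_d -> R) (rho : 'M[C]_d).

Definition assist_set f rho : set R :=
  [set x | exists k (p : 'I_k -> R) (psi : 'I_k -> 'cV[C]_d),
             pure_decomp rho p psi /\ x = \sum_i p i * f (psi i)].

Lemma assistE f rho : assist f rho = sup (assist_set f rho).
Proof. by []. Qed.

Lemma assist_set_ubound f rho (b : R) : (forall v, f v <= b) ->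
  has_ubound (assist_set f rho).
Proof.
move=> f_le; exists b => _ [k [p [psi [[p_ge0 p1 _ _] ->]]]].
rewrite -[X in _ <= X]mul1r -p1 mulr_suml; apply: ler_sum => i _.
exact: ler_wpM2l.
Qed.

Lemma assist_ge0 f rho : (forall v, adj v *m v = 1 -> 0 <= f v) -> 0 <= assist f rho.
Proof.
move=> f_ge0; rewrite assistE.
have [f_sup|no_sup] := pselect (has_sup (assist_set f rho)); last by rewrite sup_out.
have [[x Ex] _] := f_sup; apply: le_trans (sup_upper_bound f_sup Ex).
case: Ex => k [p [psi [[p_ge0 _ psi1 _] ->]]].
by apply: sumr_ge0 => i _; rewrite mulr_ge0 ?f_ge0.
Qed.

Lemma assist_set_concat K J f (q : 'I_K -> R) (tau : 'I_K -> 'M[C]_d)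
    (mu : 'I_K -> 'I_J -> R) (phi : 'I_K -> 'I_J -> 'cV[C]_d) :
  (forall k, 0 <= q k) -> \sum_k q k = 1 ->
  (forall k, pure_decomp (tau k) (mu k) (phi k)) ->
  assist_set f (\sum_k (q k)%:C *: tau k) (\sum_k q k * \sum_j mu k j * f (phi k j)).
Proof.
move=> q_ge0 q1 tau_decomp.
pose p (l : 'I_(K * J)) := let: (k, j) := mxtens_unindex l in q k * mu k j.
pose psi (l : 'I_(K * J)) := let: (k, j) := mxtens_unindex l in phi k j.
exists (K * J)%N, p, psi; split; last first.
  rewrite sum_mxtens; apply: eq_bigr => k _; rewrite mulr_sumr; apply: eq_bigr => j _.
  by rewrite /p /psi mxtens_indexK mulrA.
split.
- by move=> l; have [mu_ge0 _ _ _] := tau_decomp (mxtens_unindex l).1; rewrite mulr_ge0.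
- rewrite sum_mxtens -q1; apply: eq_bigr => k _; have [_ mu1 _ _] := tau_decomp k.
  by rewrite -[RHS]mulr1 -mu1 mulr_sumr; apply: eq_bigr => j _; rewrite /p mxtens_indexK.
- by move=> l; have [_ _ phi1 _] := tau_decomp (mxtens_unindex l).1; apply: phi1.
rewrite sum_mxtens; apply: eq_bigr => k _; have [_ _ _ ->] := tau_decomp k.
rewrite scaler_sumr; apply: eq_bigr => j _; rewrite /p /psi mxtens_indexK scalerA.
by congr (_ *: _); exact: esym (rmorphM (real_complex R) (q k) (mu k j)).
Qed.

End Assistance.

Lemma assist_le_add (R : realType) d e J (T : {linear 'M[R[i]]_d -> 'M[R[i]]_e})
    (f f' : 'cV[R[i]]_d -> R) (g : 'cV[R[i]]_e -> R) (b b' : R) (rho : 'M[R[i]]_d) :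
  (forall v, f' v <= b') -> (forall w, g w <= b) ->
  (forall w, adj w *m w = 1 -> 0 <= g w) ->
  (forall psi, adj psi *m psi = 1 ->
     exists (mu : 'I_J -> R) (phi : 'I_J -> 'cV[R[i]]_e),
       pure_decomp (T (proj psi)) mu phi /\
       f psi <= f' psi + \sum_j mu j * g (phi j)) ->
  assist f rho <= assist g (T rho) + assist f' rho.
Proof.
move=> f'_le g_le g_ge0 split_pure.
have ub_f' := assist_set_ubound rho f'_le; have ub_g := assist_set_ubound (T rho) g_le.
(* Without any pure decomposition every assisted quantity of rho is 0. *)
have [[x0 Ex0]|no_decomp] := pselect (assist_set f rho !=set0)%classic; last first.
  have no_decomp' : ~ (assist_set f' rho !=set0)%classic.
    move=> [_ [k [p [psi [rho_decomp _]]]]]; apply: no_decomp.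
    by exists (\sum_i p i * f (psi i)), k, p, psi.
  rewrite !assistE [sup (assist_set f rho)]sup_out => [|[]//].
  by rewrite [sup (assist_set f' rho)]sup_out => [|[]//]; rewrite addr0 -assistE assist_ge0.
rewrite !assistE; apply: ge_sup => [|_ [K [q [psi [rho_decomp ->]]]]]; first by exists x0.
have [q_ge0 q1 psi1 rhoE] := rho_decomp.
have /choice [dec dec_spec] : forall k, exists md : ('I_J -> R) * ('I_J -> 'cV[R[i]]_e),
    pure_decomp (T (proj (psi k))) md.1 md.2 /\
    f (psi k) <= f' (psi k) + \sum_j md.1 j * g (md.2 j).
  by move=> k; have [mu [phi ?]] := split_pure _ (psi1 k); exists (mu, phi).
have Eg : assist_set g (T rho) (\sum_k q k * \sum_j (dec k).1 j * g ((dec k).2 j)).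
  rewrite rhoE linear_sum; under eq_bigr do rewrite linearZ.
  by apply: assist_set_concat => // k; have [] := dec_spec k.
have Ef' : assist_set f' rho (\sum_k q k * f' (psi k)) by exists K, q, psi.
apply: le_trans (lerD (sup_upper_bound (conj (ex_intro _ _ Eg) ub_g) Eg)
                      (sup_upper_bound (conj (ex_intro _ _ Ef') ub_f') Ef')).
rewrite -big_split /=; apply: ler_sum => k _; rewrite -mulrDr addrC.
by apply: ler_wpM2l => //; have [] := dec_spec k.
Qed.

Theorem theorem2 (R : realType) (m n : nat) (rho : 'M[R[i]]_(m * n)) :
  density rho ->
  [/\ CohIQ_a rho <= Coh_a (ptraceB rho) + Ent_a rho,
      Coh_a rho <= CohIQ_a rho + Coh_a (ptraceA rho)
    & Coh_a rho <= Coh_a (ptraceB rho) + Coh_a (ptraceA rho) + Ent_a rho].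
Proof.
(* Only the nonemptiness of both bases is needed from [density rho]: it
   provides the default vectors of [normalize]. *)
move=> /density_dim_gt0; rewrite muln_gt0 => /andP[m_gt0 n_gt0].
have iq_le : CohIQ_a rho <= Coh_a (ptraceB rho) + Ent_a rho.
  apply: (@assist_le_add R _ _ _ _ _ (@pure_ent R m n) _ m%:R n%:R).
  - by move=> psi; apply: vN_entropy_le_dim.
  - by move=> v; apply: vN_entropy_le_dim.
  - exact: pure_coh_ge0.
  - exact: pure_iq_le_decomp (Ordinal m_gt0).
have coh_le : Coh_a rho <= CohIQ_a rho + Coh_a (ptraceA rho).
  rewrite addrC; apply: (@assist_le_add R _ _ _ _ _ (@pure_iq R m n) _ n%:R (m * n)%:R).
  - by move=> psi; apply: vN_entropy_le_dim.
  - by move=> v; apply: vN_entropy_le_dim.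
  - exact: pure_coh_ge0.
  - exact: pure_coh_le_decomp (Ordinal n_gt0).
by split => //; lra.
Qed.
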